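(* Let $\mathbf{e}_0\in\mathbb{P}\mathrm{iez}$ with leading harmonic part $\mathbf{h}_0$ and $\mathbf{g}_0=\mathbf{e}_0-\mathbf{h}_0$. Then $$\min_{\mathbf{e}\in\overline{\Sigma}_{[\mathbb{O}^-]}}\|\mathbf{e}_0-\mathbf{e}\|^2=\|\mathbf{g}_0\|^2+\min_{\mathbf{h}\in\mathbb{H}^3(\mathbb{R}^3),\ \mathbf{d}_2'(\mathbf{h})=0}\|\mathbf{h}_0-\mathbf{h}\|^2,$$ and $\mathbf{e}$ is a minimizer of the left-hand problem if and only if $\mathbf{e}=\mathbf{h}$ with $\mathbf{h}$ a minimizer of $\|\mathbf{h}_0-\mathbf{h}\|^2$ over $\{\mathbf{h}\in\mathbb{H}^3(\mathbb{R}^3):\mathbf{d}_2'(\mathbf{h})=0\}$ (a 7-variable polynomial optimization problem).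
   Context: $\mathbb{P}\mathrm{iez}=\{\mathbf{e}\in\otimes^3\mathbb{R}^3: \mathrm{e}_{ijk}=\mathrm{e}_{ikj}\}$ with $\mathrm{O}(3)$-action $(g\cdot\mathbf{e})_{ijk}=g_{ia}g_{jb}g_{kc}\mathrm{e}_{abc}$ and norm $\|\mathbf{e}\|^2=\mathrm{e}_{ijk}\mathrm{e}_{ijk}$. $\mathbf{q}=(\delta_{ij})$. $(\mathbf{e}^s)_{ijk}=\frac13(\mathrm{e}_{ijk}+\mathrm{e}_{jik}+\mathrm{e}_{kji})$, $u_i=(\mathbf{e}^s)_{ikk}$, $(\mathbf{q}\odot\mathbf{u})_{ijk}=\frac13(\delta_{ij}u_k+\delta_{ik}u_j+\delta_{jk}u_i)$; the leading harmonic part of $\mathbf{e}$ is $\mathbf{h}=\mathbf{e}^s-\frac35\mathbf{q}\odot\mathbf{u}$. $\mathbb{H}^3(\mathbb{R}^3)$ is the 7-dimensional space of totally symmetric traceless third-order tensors. For $\mathbf{h}\in\mathbb{H}^3(\mathbb{R}^3)$: $(\mathbf{d}_2)_{ij}=h_{ikl}h_{klj}$, $\mathbf{d}_2'(\mathbf{h})=\mathbf{d}_2-\frac13\operatorname{tr}(\mathbf{d}_2)\mathbf{q}$. $\mathbb{O}^-\subset\mathrm{O}(3)$ is the group of orthogonal transformations preserving the regular tetrahedron with vertices $(1,1,1),(1,-1,-1),(-1,1,-1),(-1,-1,1)$. $\overline{\Sigma}_{[\mathbb{O}^-]}=\{\mathbf{e}\in\mathbb{P}\mathrm{iez}:\exists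 g\in\mathrm{O}(3),\ k\cdot\mathbf{e}=\mathbf{e}\ \forall k\in g\mathbb{O}^-g^{-1}\}$. *)

From HB Require Import structures.
From mathcomp Require Import all_boot all_order all_algebra.
From mathcomp Require Import reals.
Set Implicit Arguments. Unset Strict Implicit. Unset Printing Implicit Defensive.
Import Order.TTheory GRing.Theory Num.Theory.
Local Open Scope ring_scope.

Section Defs.
Variable R : realType.

Definition tensor3 := 'I_3 -> 'I_3 -> 'I_3 -> R.

Definition is_piez (e : tensor3) : Prop := forall i j k, e i j k = e i k j.

Definition tnorm2 (e : tensor3) : R :=
  \sum_(i < 3) \sum_(j < 3) \sum_(k < 3) (e i j k) ^+ 2.

Definition tsub (e f : tensor3) : tensor3 := fun i j k => e i j k - f i j k.

Definition orthogonal3 (g : 'M[R]_3) : Prop := g *m g^T = 1%:M.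

Definition tact (g : 'M[R]_3) (e : tensor3) : tensor3 :=
  fun i j k => \sum_(a < 3) \sum_(b < 3) \sum_(c < 3) g i a * g j b * g k c * e a b c.

(* vertices of the regular tetrahedron:
   v0 = (1,1,1), v1 = (1,-1,-1), v2 = (-1,1,-1), v3 = (-1,-1,1) *)
Definition tetra_vertex (m : 'I_4) : 'cV[R]_3 :=
  \col_(i < 3) (if (val m == 0%N) || (val m == i.+1) then 1 else -1).

(* O^- : orthogonal transformations preserving the tetrahedron (mapping its
   vertex set onto itself; surjectivity follows from injectivity of g) *)
Definition in_Ominus (g : 'M[R]_3) : Prop :=
  orthogonal3 g /\ forall m : 'I_4, exists n : 'I_4, g *m tetra_vertex m = tetra_vertex n.

Definition in_closed_stratum_Ominus (e : tensor3) : Prop :=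
  is_piez e /\
  exists g : 'M[R]_3, orthogonal3 g /\
    forall k0 : 'M[R]_3, in_Ominus k0 -> tact (g *m k0 *m invmx g) e = e.

Definition tsym (e : tensor3) : tensor3 :=
  fun i j k => (e i j k + e j i k + e k j i) / 3%:R.

Definition uvec (e : tensor3) (i : 'I_3) : R := \sum_(k < 3) tsym e i k k.

Definition kron (i j : 'I_3) : R := if i == j then 1 else 0.

Definition q_odot (u : 'I_3 -> R) : tensor3 :=
  fun i j k => (kron i j * u k + kron i k * u j + kron j k * u i) / 3%:R.

Definition harm_part (e : tensor3) : tensor3 :=
  fun i j k => tsym e i j k - 3%:R / 5%:R * q_odot (uvec e) i j k.

Definition is_harm3 (h : tensor3) : Prop :=
  (forall i j k, h i j k = h j i k) /\ (forall i j k, h i j k = h i k j) /\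
  (forall i, \sum_(k < 3) h i k k = 0).

Definition d2 (h : tensor3) (i j : 'I_3) : R :=
  \sum_(k < 3) \sum_(l < 3) h i k l * h k l j.

Definition d2dev (h : tensor3) (i j : 'I_3) : R :=
  d2 h i j - (\sum_(k < 3) d2 h k k) / 3%:R * kron i j.

Definition d2dev_zero (h : tensor3) : Prop := forall i j, d2dev h i j = 0.

Definition is_minimizer (S : tensor3 -> Prop) (x0 x : tensor3) : Prop :=
  S x /\ forall y, S y -> tnorm2 (tsub x0 x) <= tnorm2 (tsub x0 y).

End Defs.

(* e0 - h0 is orthogonal to every harmonic tensor, so for harmonic e we have
   ||e0 - e||^2 = ||g0||^2 + ||h0 - e||^2, and everything reduces to proving that
   the closed stratum is exactly {h harmonic | d2'(h) = 0}.

   The tensors fixed by O^- are the multiples of X (X_ijk = 1 iff i, j, k are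
   pairwise distinct), which is harmonic with d2(X) = 2 I; as d2 is
   O(3)-equivariant, the stratum lies in the zero set of d2'.  Conversely, let
   h be harmonic with d2'(h) = 0 and rotate e3 onto a unit vector maximizing
   |h(n,n,n)|: the Lagrange condition makes h(e3,e3,.) parallel to e3, and
   d2'(h) = 0 becomes a polynomial system in the five remaining coordinates of
   h.  Its solutions are, up to one more rotation (about e3, again obtained from
   a maximization, now on a circle), rotated multiples of X.

   Finally the zero set of d2' is closed in the 7-dimensional space of harmonic
   tensors and the distance to h0 is coercive, so a minimizer exists. *)
From HB Require Import structures.
From mathcomp Require Import all_boot all_order all_algebra.
From mathcomp Require Import reals.
From mathcomp.algebra_tactics Require Import ring lra.
From mathcomp Require Import all_classical all_reals all_analysis.
Import Order.TTheory GRing.Theory Num.Theory.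
Import numFieldNormedType.Exports.
Local Open Scope ring_scope.
Set Implicit Arguments. Unset Strict Implicit. Unset Printing Implicit Defensive.

Definition o0 : 'I_3 := @Ordinal 3 0 isT.
Definition o1 : 'I_3 := @Ordinal 3 1 isT.
Definition o2 : 'I_3 := @Ordinal 3 2 isT.

Lemma ord3P (i : 'I_3) : i = o0 \/ i = o1 \/ i = o2.
Proof.
case: i => [[|[|[|n]]] Hi]; last by [].
- by left; apply: val_inj.
- by right; left; apply: val_inj.
- by right; right; apply: val_inj.
Qed.

Lemma sum_ord3 (V : nmodType) (F : 'I_3 -> V) : \sum_(i < 3) F i = F o0 + F o1 + F o2.
Proof.
rewrite !big_ord_recr big_ord0 /= add0r.
by congr (F _ + F _ + F _); apply: val_inj.
Qed.

Definition p0 : 'I_4 := @Ordinal 4 0 isT.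
Definition p1 : 'I_4 := @Ordinal 4 1 isT.
Definition p2 : 'I_4 := @Ordinal 4 2 isT.
Definition p3 : 'I_4 := @Ordinal 4 3 isT.

Lemma ord4P (i : 'I_4) : i = p0 \/ i = p1 \/ i = p2 \/ i = p3.
Proof.
case: i => [[|[|[|[|n]]]] Hi]; last by [].
- by left; apply: val_inj.
- by right; left; apply: val_inj.
- by right; right; left; apply: val_inj.
- by right; right; right; apply: val_inj.
Qed.

Lemma sum_ord4 (V : nmodType) (F : 'I_4 -> V) :
  \sum_(i < 4) F i = F p0 + F p1 + F p2 + F p3.
Proof.
rewrite !big_ord_recr big_ord0 /= add0r.
by congr (F _ + F _ + F _ + F _); apply: val_inj.
Qed.

Ltac case_ord3 i := case: (ord3P i) => [->|[->|->]].

Section TensorAction.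
Variable R : realType.
Implicit Types (e f h : tensor3 R) (A B g : 'M[R]_3).

Lemma tensor_ext e f : (forall i j k, e i j k = f i j k) -> e = f.
Proof. by move=> ef; apply/funext => i; apply/funext => j; apply/funext => k. Qed.

Definition mode1 g e : tensor3 R := fun i j k => \sum_(a < 3) g i a * e a j k.
Definition mode2 g e : tensor3 R := fun i j k => \sum_(b < 3) g j b * e i b k.
Definition mode3 g e : tensor3 R := fun i j k => \sum_(c < 3) g k c * e i j c.

Lemma tact_modes g e : tact g e = mode1 g (mode2 g (mode3 g e)).
Proof.
apply: tensor_ext => i j k; apply: eq_bigr => a _; rewrite mulr_sumr.
apply: eq_bigr => b _; rewrite !mulr_sumr; apply: eq_bigr => c _; by rewrite !mulrA.
Qed.

Lemma mode1M A B e : mode1 (A *m B) e = mode1 A (mode1 B e).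
Proof.
apply: tensor_ext => i j k; rewrite /mode1.
under eq_bigr do rewrite mxE mulr_suml.
rewrite exchange_big; apply: eq_bigr => m _; rewrite mulr_sumr.
by apply: eq_bigr => a _; rewrite mulrA.
Qed.

Lemma mode2M A B e : mode2 (A *m B) e = mode2 A (mode2 B e).
Proof.
apply: tensor_ext => i j k; rewrite /mode2.
under eq_bigr do rewrite mxE mulr_suml.
rewrite exchange_big; apply: eq_bigr => m _; rewrite mulr_sumr.
by apply: eq_bigr => a _; rewrite mulrA.
Qed.

Lemma mode3M A B e : mode3 (A *m B) e = mode3 A (mode3 B e).
Proof.
apply: tensor_ext => i j k; rewrite /mode3.
under eq_bigr do rewrite mxE mulr_suml.
rewrite exchange_big; apply: eq_bigr => m _; rewrite mulr_sumr.
by apply: eq_bigr => a _; rewrite mulrA.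
Qed.

Lemma mode12C A B e : mode1 A (mode2 B e) = mode2 B (mode1 A e).
Proof.
apply: tensor_ext => i j k; rewrite /mode1 /mode2.
under eq_bigr do rewrite mulr_sumr.
rewrite exchange_big; apply: eq_bigr => b _; rewrite mulr_sumr.
by apply: eq_bigr => a _; rewrite mulrCA.
Qed.

Lemma mode13C A B e : mode1 A (mode3 B e) = mode3 B (mode1 A e).
Proof.
apply: tensor_ext => i j k; rewrite /mode1 /mode3.
under eq_bigr do rewrite mulr_sumr.
rewrite exchange_big; apply: eq_bigr => b _; rewrite mulr_sumr.
by apply: eq_bigr => a _; rewrite mulrCA.
Qed.

Lemma mode23C A B e : mode2 A (mode3 B e) = mode3 B (mode2 A e).
Proof.
apply: tensor_ext => i j k; rewrite /mode2 /mode3.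
under eq_bigr do rewrite mulr_sumr.
rewrite exchange_big; apply: eq_bigr => b _; rewrite mulr_sumr.
by apply: eq_bigr => a _; rewrite mulrCA.
Qed.

Lemma tactM A B e : tact (A *m B) e = tact A (tact B e).
Proof.
rewrite !tact_modes mode1M mode2M mode3M; congr (mode1 A _).
rewrite -mode13C -mode12C; congr (mode1 B _); congr (mode2 A _).
by rewrite mode23C.
Qed.

Lemma kronE a b : kron R a b = (a == b)%:R.
Proof. by rewrite /kron; case: (a == b). Qed.

Lemma sum_kron (u : 'I_3 -> R) a : \sum_(b < 3) kron R a b * u b = u a.
Proof. by rewrite sum_ord3 /kron; case_ord3 a; rewrite /=; ring. Qed.

Lemma mode1_id e : mode1 1%:M e = e.
Proof.
apply: tensor_ext => i j k; rewrite /mode1 -[RHS](sum_kron (fun a => e a j k)).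
by apply: eq_bigr => a _; rewrite mxE kronE.
Qed.

Lemma mode2_id e : mode2 1%:M e = e.
Proof.
apply: tensor_ext => i j k; rewrite /mode2 -[RHS](sum_kron (fun b => e i b k)).
by apply: eq_bigr => b _; rewrite mxE kronE.
Qed.

Lemma mode3_id e : mode3 1%:M e = e.
Proof.
apply: tensor_ext => i j k; rewrite /mode3 -[RHS](sum_kron (fun c => e i j c)).
by apply: eq_bigr => c _; rewrite mxE kronE.
Qed.

Lemma tact1 e : tact 1%:M e = e.
Proof. by rewrite tact_modes mode3_id mode2_id mode1_id. Qed.

Definition tscale (l : R) e : tensor3 R := fun i j k => l * e i j k.

Lemma tactZ g l e : tact g (tscale l e) = tscale l (tact g e).
Proof.
apply: tensor_ext => i j k; rewrite /tact /tscale mulr_sumr; apply: eq_bigr => a _.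
rewrite mulr_sumr; apply: eq_bigr => b _; rewrite mulr_sumr; apply: eq_bigr => c _.
by rewrite mulrCA.
Qed.

Lemma orthogonal3_tr g : orthogonal3 g -> g^T *m g = 1%:M.
Proof. by move=> Hg; apply: mulmx1C; exact: Hg. Qed.

Lemma orthogonal3_trmx g : orthogonal3 g -> orthogonal3 g^T.
Proof. by move=> Hg; rewrite /orthogonal3 trmxK orthogonal3_tr. Qed.

Lemma orthogonal3_mul A B : orthogonal3 A -> orthogonal3 B -> orthogonal3 (A *m B).
Proof.
move=> HA HB; rewrite /orthogonal3 trmx_mul mulmxA -(mulmxA A) HB mulmx1; exact: HA.
Qed.

Lemma orthogonal3_invmx g : orthogonal3 g -> invmx g = g^T.
Proof.
move=> Hg; have [gU _] := mulmx1_unit (Hg : g *m g^T = 1%:M).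
by rewrite -[RHS]mul1mx -(mulVmx gU) -mulmxA (Hg : g *m g^T = 1%:M) mulmx1.
Qed.

Lemma orthogonal3_rows g a b : orthogonal3 g -> \sum_(k < 3) g a k * g b k = kron R a b.
Proof.
move=> Hg; have := congr1 (fun M : 'M[R]_3 => M a b) (Hg : g *m g^T = 1%:M).
by rewrite !mxE kronE => <-; apply: eq_bigr => k _; rewrite mxE.
Qed.

Lemma orthogonal3_cols g a b : orthogonal3 g -> \sum_(k < 3) g k a * g k b = kron R a b.
Proof.
move=> /orthogonal3_tr Hg; have := congr1 (fun M : 'M[R]_3 => M a b) Hg.
by rewrite !mxE kronE => <-; apply: eq_bigr => k _; rewrite mxE.
Qed.

Lemma orthogonal3_dot g (u v : 'I_3 -> R) : orthogonal3 g ->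
  \sum_(k < 3) (\sum_(b < 3) g k b * u b) * (\sum_(c < 3) g k c * v c) =
  \sum_(b < 3) u b * v b.
Proof.
move=> Hg.
have -> : \sum_(k < 3) (\sum_(b < 3) g k b * u b) * (\sum_(c < 3) g k c * v c) =
  \sum_(b < 3) u b * \sum_(c < 3) (\sum_(k < 3) g k b * g k c) * v c.
  by rewrite !sum_ord3; ring.
apply: eq_bigr => b _; rewrite -[v b](sum_kron v b).
by congr (_ * _); apply: eq_bigr => c _; rewrite orthogonal3_cols.
Qed.

Definition contr23 e f (i j : 'I_3) : R := \sum_(k < 3) \sum_(l < 3) e i k l * f j k l.

Lemma contr23_mode1 A e f i j : contr23 (mode1 A e) (mode1 A f) i j =
  \sum_(a < 3) \sum_(b < 3) A i a * A j b * contr23 e f a b.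
Proof. rewrite /contr23 /mode1 !sum_ord3; ring. Qed.

Lemma contr23_mode2 g e f i j : orthogonal3 g ->
  contr23 (mode2 g e) (mode2 g f) i j = contr23 e f i j.
Proof.
move=> Hg; rewrite /contr23 /mode2 exchange_big [RHS]exchange_big; apply: eq_bigr => l _.
exact: (orthogonal3_dot (fun b => e i b l) (fun c => f j c l) Hg).
Qed.

Lemma contr23_mode3 g e f i j : orthogonal3 g ->
  contr23 (mode3 g e) (mode3 g f) i j = contr23 e f i j.
Proof.
move=> Hg; rewrite /contr23 /mode3; apply: eq_bigr => k _.
exact: (orthogonal3_dot (fun b => e i k b) (fun c => f j k c) Hg).
Qed.

Lemma contr23_tact g e f i j : orthogonal3 g ->
  contr23 (tact g e) (tact g f) i j =
  \sum_(a < 3) \sum_(b < 3) g i a * g j b * contr23 e f a b.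
Proof.
move=> Hg; rewrite !tact_modes contr23_mode1; apply: eq_bigr => a _; apply: eq_bigr => b _.
by rewrite contr23_mode2 // contr23_mode3.
Qed.

Lemma tact_sym12 g h : (forall i j k, h i j k = h j i k) ->
  forall i j k, tact g h i j k = tact g h j i k.
Proof.
move=> H1 i j k; rewrite /tact exchange_big; apply: eq_bigr => a _; apply: eq_bigr => b _.
apply: eq_bigr => c _; rewrite H1; ring.
Qed.

Lemma tact_sym23 g h : (forall i j k, h i j k = h i k j) ->
  forall i j k, tact g h i j k = tact g h i k j.
Proof.
move=> H2 i j k; rewrite /tact; apply: eq_bigr => a _; rewrite exchange_big.
apply: eq_bigr => b _; apply: eq_bigr => c _; rewrite H2; ring.
Qed.

Lemma tact_trace g h i : orthogonal3 g -> (forall a, \sum_(k < 3) h a k k = 0) ->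
  \sum_(k < 3) tact g h i k k = 0.
Proof.
move=> Hg H3.
have -> : \sum_(k < 3) tact g h i k k = \sum_(a < 3) g i a *
   \sum_(b < 3) \sum_(c < 3) (\sum_(k < 3) g k b * g k c) * h a b c.
  by rewrite /tact !sum_ord3; ring.
rewrite big1 // => a _.
rewrite (eq_bigr (fun b => h a b b)) ?H3 ?mulr0 // => b _.
rewrite -[RHS](sum_kron (fun c => h a b c)).
by apply: eq_bigr => c _; rewrite orthogonal3_cols.
Qed.

Lemma is_harm3_tact g h : orthogonal3 g -> is_harm3 h -> is_harm3 (tact g h).
Proof.
move=> Hg [H1 [H2 H3]]; split; [|split].
- exact: tact_sym12.
- exact: tact_sym23.
- by move=> i; apply: tact_trace.
Qed.

Lemma d2_contr23 h i j : is_harm3 h -> d2 h i j = contr23 h h i j.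
Proof.
move=> [H1 [H2 _]]; rewrite /d2 /contr23; apply: eq_bigr => k _; apply: eq_bigr => l _.
by rewrite (H2 k l j) (H1 k j l).
Qed.

Lemma d2_tact g h i j : orthogonal3 g -> is_harm3 h ->
  d2 (tact g h) i j = \sum_(a < 3) \sum_(b < 3) g i a * g j b * d2 h a b.
Proof.
move=> Hg Hh; rewrite d2_contr23; last exact: is_harm3_tact.
rewrite contr23_tact //.
by apply: eq_bigr => a _; apply: eq_bigr => b _; rewrite d2_contr23.
Qed.

Lemma d2dev_zeroP h : d2dev_zero h <->
  forall i j, d2 h i j = (\sum_(k < 3) d2 h k k) / 3%:R * kron R i j.
Proof.
split=> H i j; have := H i j; rewrite /d2dev.
- by move/eqP; rewrite subr_eq0 => /eqP.
- by move=> ->; rewrite subrr.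
Qed.

Lemma d2dev_zero_tact g h : orthogonal3 g -> is_harm3 h -> d2dev_zero h ->
  d2dev_zero (tact g h).
Proof.
move=> Hg Hh /d2dev_zeroP Hd.
set mu := (\sum_(k < 3) d2 h k k) / 3%:R.
have E i j : d2 (tact g h) i j = mu * kron R i j.
  rewrite d2_tact //.
  transitivity (\sum_(a < 3) \sum_(b < 3) kron R a b * (mu * (g i a * g j b))).
    by apply: eq_bigr => a _; apply: eq_bigr => b _; rewrite Hd -/mu; ring.
  rewrite (eq_bigr (fun a => mu * (g i a * g j a))); last first.
    by move=> a _; rewrite (sum_kron (fun b => mu * (g i a * g j b))).
  by rewrite -mulr_sumr orthogonal3_rows.
apply/d2dev_zeroP => i j; rewrite sum_ord3 !E /kron !eqxx; by field.
Qed.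

End TensorAction.

Section TetrahedralTensor.
Variable R : realType.
Implicit Types (e h : tensor3 R) (g : 'M[R]_3).

Definition tetraX : tensor3 R := fun i j k =>
  if (i != j) && (j != k) && (i != k) then 1 else 0.

(* X = (1/4) sum_m v_m (x) v_m (x) v_m over the vertices v_m of the tetrahedron,
   which makes its invariance under O^- evident. *)
Lemma tetraX_vertices i j k : tetraX i j k =
  4%:R^-1 * \sum_(m < 4) tetra_vertex R m i ord0 * tetra_vertex R m j ord0 *
                         tetra_vertex R m k ord0.
Proof.
rewrite sum_ord4 !mxE /tetraX.
by case_ord3 i; case_ord3 j; case_ord3 k; rewrite /=; field.
Qed.

Lemma tact_tetraX_vertices g i j k : tact g tetraX i j k =
  4%:R^-1 * \sum_(m < 4) (g *m tetra_vertex R m) i ord0 *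
    (g *m tetra_vertex R m) j ord0 * (g *m tetra_vertex R m) k ord0.
Proof.
rewrite /tact.
under eq_bigr do under eq_bigr do under eq_bigr do rewrite tetraX_vertices.
rewrite !sum_ord3 !sum_ord4 !mxE !sum_ord3 !mxE /=; ring.
Qed.

Lemma tetra_vertex_inj : injective (tetra_vertex R).
Proof.
move=> m1 m2 E.
have E0 := congr1 (fun M : 'cV[R]_3 => M o0 ord0) E.
have E1 := congr1 (fun M : 'cV[R]_3 => M o1 ord0) E.
have E2 := congr1 (fun M : 'cV[R]_3 => M o2 ord0) E.
rewrite /= !mxE /= in E0 E1 E2; clear E; move: E0 E1 E2.
case: (ord4P m1) => [->|[->|[->|->]]]; case: (ord4P m2) => [->|[->|[->|->]]];
  rewrite /= => E0 E1 E2 //; exfalso; lra.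
Qed.

Lemma tact_tetraX g : in_Ominus g -> tact g tetraX = tetraX.
Proof.
move=> [Hg Hv].
pose pi m := odflt m [pick n | g *m tetra_vertex R m == tetra_vertex R n].
have piP m : g *m tetra_vertex R m = tetra_vertex R (pi m).
  rewrite /pi; case: pickP => [n /eqP //|H].
  by have [n En] := Hv m; move: (H n); rewrite En eqxx.
have pi_inj : injective pi.
  move=> m1 m2 E; apply: tetra_vertex_inj.
  have : g^T *m (g *m tetra_vertex R m1) = g^T *m (g *m tetra_vertex R m2).
    by rewrite !piP E.
  by rewrite !mulmxA orthogonal3_tr // !mul1mx.
apply: tensor_ext => i j k; rewrite tact_tetraX_vertices tetraX_vertices.
rewrite [in RHS](reindex_inj pi_inj) /=.
by congr (_ * _); apply: eq_bigr => m _; rewrite piP.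
Qed.

Definition signed_perm_mx (s : 'I_3 -> R) (f : 'I_3 -> 'I_3) : 'M[R]_3 :=
  \matrix_(i, a) (if a == f i then s i else 0).

Lemma tact_signed_perm_mx s f e i j k :
  tact (signed_perm_mx s f) e i j k = s i * s j * s k * e (f i) (f j) (f k).
Proof.
have spm_sum i' (X : 'I_3 -> R) :
    \sum_(a < 3) signed_perm_mx s f i' a * X a = s i' * X (f i').
  by rewrite sum_ord3 !mxE; case_ord3 (f i'); rewrite /=; ring.
rewrite tact_modes /mode1 spm_sum /mode2 spm_sum /mode3 spm_sum; ring.
Qed.

Definition flip1 (i : 'I_3) : R := if i == o0 then 1 else -1.
Definition flip2 (i : 'I_3) : R := if i == o1 then 1 else -1.
Definition cycle3 (i : 'I_3) : 'I_3 := if i == o0 then o1 else if i == o1 then o2 else o0.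

Ltac orthogonal_tac := apply/matrixP;
  let i := fresh "i" in let j := fresh "j" in move=> i j;
  rewrite !mxE sum_ord3 !mxE; case_ord3 i; case_ord3 j;
  rewrite /flip1 /flip2 /cycle3 /=; ring.

Ltac vertex_tac n := exists n; apply/matrixP;
  let i := fresh "i" in let z := fresh "z" in move=> i z;
  rewrite (ord1 z) !mxE sum_ord3 !mxE; case_ord3 i;
  rewrite /flip1 /flip2 /cycle3 /=; ring.

Lemma Ominus_flip1 : in_Ominus (signed_perm_mx flip1 id).
Proof.
split; first by orthogonal_tac.
move=> m; case: (ord4P m) => [->|[->|[->|->]]];
  [vertex_tac p1 | vertex_tac p0 | vertex_tac p3 | vertex_tac p2].
Qed.

Lemma Ominus_flip2 : in_Ominus (signed_perm_mx flip2 id).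
Proof.
split; first by orthogonal_tac.
move=> m; case: (ord4P m) => [->|[->|[->|->]]];
  [vertex_tac p2 | vertex_tac p3 | vertex_tac p0 | vertex_tac p1].
Qed.

Lemma Ominus_cycle3 : in_Ominus (signed_perm_mx (fun=> 1) cycle3).
Proof.
split; first by orthogonal_tac.
move=> m; case: (ord4P m) => [->|[->|[->|->]]];
  [vertex_tac p0 | vertex_tac p3 | vertex_tac p1 | vertex_tac p2].
Qed.

(* Two sign flips and the cyclic permutation of the axes already force a
   piezoelectric invariant to be a multiple of X. *)
Lemma Ominus_fixed_piez e : is_piez e -> (forall k0, in_Ominus k0 -> tact k0 e = e) ->
  e = tscale (e o0 o1 o2) tetraX.
Proof.
move=> Hp Hk.
have fixed s f : in_Ominus (signed_perm_mx s f) ->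
    forall i j k, e i j k = s i * s j * s k * e (f i) (f j) (f k).
  by move=> /Hk Hsf i j k; rewrite -{1}Hsf tact_signed_perm_mx.
have H1 := fixed _ _ Ominus_flip1; have H2 := fixed _ _ Ominus_flip2.
have H3 := fixed _ _ Ominus_cycle3.
have Ha := H3 o0 o1 o2; have Hb := H3 o1 o2 o0; rewrite /cycle3 /= !mul1r in Ha Hb.
have E4 := Hp o2 o0 o1.
apply: tensor_ext => i j k; rewrite /tscale /tetraX.
have E1 := H1 i j k; have E2 := H2 i j k; have E3 := Hp i j k.
move: E1 E2 E3; rewrite /flip1 /flip2.
by case_ord3 i; case_ord3 j; case_ord3 k; rewrite /= => E1 E2 E3; lra.
Qed.

Lemma is_harm3_tetraX l : is_harm3 (tscale l tetraX).
Proof.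
rewrite /tscale /tetraX; split; [|split].
- by move=> i j k; case_ord3 i; case_ord3 j; case_ord3 k.
- by move=> i j k; case_ord3 i; case_ord3 j; case_ord3 k.
- by move=> i; rewrite sum_ord3; case_ord3 i; rewrite /=; ring.
Qed.

Lemma d2dev_zero_tetraX l : d2dev_zero (tscale l tetraX).
Proof.
move=> i j; rewrite /d2dev /d2 /tscale /tetraX /kron !sum_ord3.
by case_ord3 i; case_ord3 j; rewrite /=; field.
Qed.

Definition tetraX_orbit h := exists g l, orthogonal3 g /\ h = tact g (tscale l tetraX).

Lemma tetraX_orbit_tact g h : orthogonal3 g -> tetraX_orbit (tact g h) -> tetraX_orbit h.
Proof.
move=> Hg [G [l [HG E]]]; exists (g^T *m G), l; split.
  by apply: orthogonal3_mul => //; apply: orthogonal3_trmx.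
by rewrite tactM -E -tactM orthogonal3_tr // tact1.
Qed.

Lemma stratum_tetraX_orbit e : in_closed_stratum_Ominus e -> tetraX_orbit e.
Proof.
move=> [Hp [g [Hg Hk]]].
apply: (tetraX_orbit_tact (orthogonal3_trmx Hg)); exists 1%:M, (tact g^T e o0 o1 o2).
split; first by rewrite /orthogonal3 trmx1 mulmx1.
rewrite tact1; apply: Ominus_fixed_piez; first by move=> i j k; apply: tact_sym23.
move=> k0 Hk0; rewrite -tactM -{2}(Hk k0 Hk0) -tactM orthogonal3_invmx //.
by rewrite !mulmxA orthogonal3_tr // mul1mx.
Qed.

Lemma tetraX_orbit_harm h : tetraX_orbit h -> is_harm3 h /\ d2dev_zero h.
Proof.
move=> [g [l [Hg ->]]]; split; first exact: is_harm3_tact (is_harm3_tetraX _).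
exact: d2dev_zero_tact (is_harm3_tetraX _) (d2dev_zero_tetraX _).
Qed.

Lemma tetraX_orbit_stratum h : tetraX_orbit h -> in_closed_stratum_Ominus h.
Proof.
move=> Horb; have [[_ [Hpiez _]] _] := tetraX_orbit_harm Horb.
case: Horb => g [l [Hg E]]; split => //; exists g; split => // k0 Hk0.
rewrite E orthogonal3_invmx // -!tactM -!mulmxA orthogonal3_tr // mulmx1.
by rewrite tactM tactZ tact_tetraX.
Qed.

End TetrahedralTensor.
Arguments tetraX {R}.

Section HarmonicCoordinates.
Variable R : realType.
Implicit Types (a b c e h : tensor3 R).

(* A harmonic tensor is determined by h_111, h_112, h_113, h_122, h_123, h_222,
   h_223; [harm7] rebuilds it from these, reading the entry h_ijk off the
   number of indices equal to 1 and to 2 (0-based: equal to 0 and to 1). *)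
Definition harm7 (q0 q1 q2 q3 q4 q5 q6 : R) : tensor3 R := fun i j k =>
  let cnt m := ((val i == m) + (val j == m) + (val k == m))%N in
  match cnt 0%N, cnt 1%N with
  | 3, _ => q0 | 2, 1 => q1 | 2, _ => q2 | 1, 2 => q3 | 1, 1 => q4
  | 1, _ => - q0 - q3 | 0, 3 => q5 | 0, 2 => q6 | 0, 1 => - q1 - q5
  | _, _ => - q2 - q6 end.

Lemma is_harm3_harm7 q0 q1 q2 q3 q4 q5 q6 : is_harm3 (harm7 q0 q1 q2 q3 q4 q5 q6).
Proof.
split; [|split].
- by move=> i j k; case_ord3 i; case_ord3 j; case_ord3 k.
- by move=> i j k; case_ord3 i; case_ord3 j; case_ord3 k.
- by move=> i; rewrite sum_ord3; case_ord3 i; rewrite /harm7 /=; ring.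
Qed.

Lemma harm7_coords h : is_harm3 h ->
  h = harm7 (h o0 o0 o0) (h o0 o0 o1) (h o0 o0 o2) (h o0 o1 o1) (h o0 o1 o2)
            (h o1 o1 o1) (h o1 o1 o2).
Proof.
move=> [H1 [H2 H3]].
have T0 := H3 o0; have T1 := H3 o1; have T2 := H3 o2.
rewrite sum_ord3 in T0; rewrite sum_ord3 in T1; rewrite sum_ord3 in T2.
apply: tensor_ext => i j k; case_ord3 i; case_ord3 j; case_ord3 k; rewrite /harm7 /=;
repeat rewrite ?(H1 o1 o0) ?(H1 o2 o0) ?(H1 o2 o1) ?(H2 _ o1 o0) ?(H2 _ o2 o0)
  ?(H2 _ o2 o1) in T0 T1 T2 *;
lra.
Qed.

Lemma harm7_0 i j k : harm7 0 0 0 0 0 0 0 i j k = 0 :> R.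
Proof. by case_ord3 i; case_ord3 j; case_ord3 k; rewrite /harm7 /=; ring. Qed.

Definition tdot e f := \sum_(i < 3) \sum_(j < 3) \sum_(k < 3) e i j k * f i j k.

Lemma tnorm2_ge0 e : 0 <= tnorm2 e.
Proof. by do 3 (apply: sumr_ge0 => ? _); apply: sqr_ge0. Qed.

Lemma tnorm2_sub_split a b c :
  tnorm2 (tsub a c) = tnorm2 (tsub a b) + tnorm2 (tsub b c) +
                      2%:R * tdot (tsub a b) (tsub b c).
Proof.
rewrite /tnorm2 /tdot /tsub mulr_sumr -!big_split; apply: eq_bigr => i _ /=.
rewrite mulr_sumr -!big_split; apply: eq_bigr => j _ /=.
rewrite mulr_sumr -!big_split; apply: eq_bigr => k _ /=; ring.
Qed.

Lemma is_harm3_sub a b : is_harm3 a -> is_harm3 b -> is_harm3 (tsub a b).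
Proof.
move=> [A1 [A2 A3]] [B1 [B2 B3]]; rewrite /tsub; split; [|split].
- by move=> i j k; rewrite A1 B1.
- by move=> i j k; rewrite A2 B2.
- by move=> i; rewrite sumrB A3 B3 subrr.
Qed.

Lemma is_harm3_harm_part e : is_piez e -> is_harm3 (harm_part e).
Proof.
move=> Hp; rewrite /harm_part /tsym /uvec /q_odot /kron /tsym; split; [|split].
- move=> i j k; rewrite !sum_ord3; case_ord3 i; case_ord3 j; case_ord3 k; rewrite /=;
  by rewrite ?(Hp _ o1 o0) ?(Hp _ o2 o0) ?(Hp _ o2 o1); field.
- move=> i j k; rewrite !sum_ord3; case_ord3 i; case_ord3 j; case_ord3 k; rewrite /=;
  by rewrite ?(Hp _ o1 o0) ?(Hp _ o2 o0) ?(Hp _ o2 o1); field.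
- move=> i; rewrite !sum_ord3; case_ord3 i; rewrite /=;
  by rewrite ?(Hp _ o1 o0) ?(Hp _ o2 o0) ?(Hp _ o2 o1); field.
Qed.

Lemma tdot_harm_part e h : is_piez e -> is_harm3 h -> tdot (tsub e (harm_part e)) h = 0.
Proof.
move=> Hp /harm7_coords ->.
rewrite /tdot /tsub /harm_part /tsym /uvec /q_odot /kron !sum_ord3 /harm7 /=.
by rewrite ?(Hp _ o1 o0) ?(Hp _ o2 o0) ?(Hp _ o2 o1); field.
Qed.

Lemma tnorm2_harm_part_split e h : is_piez e -> is_harm3 h ->
  tnorm2 (tsub e h) = tnorm2 (tsub e (harm_part e)) + tnorm2 (tsub (harm_part e) h).
Proof.
move=> Hp Hh; rewrite (tnorm2_sub_split _ (harm_part e)) tdot_harm_part ?mulr0 ?addr0 //.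
by apply: is_harm3_sub => //; exact: is_harm3_harm_part.
Qed.

End HarmonicCoordinates.

Section CubicForm.
Variable R : realType.
Implicit Types (h : tensor3 R) (g : 'M[R]_3) (n u w x y z : 'I_3 -> R).

Definition trilin h x y z :=
  \sum_(i < 3) \sum_(j < 3) \sum_(k < 3) h i j k * x i * y j * z k.
Definition cubic h x := trilin h x x x.
Definition sqnorm x := \sum_(i < 3) x i ^+ 2.
Definition vdot x y := \sum_(i < 3) x i * y i.
Definition vshift x t w : 'I_3 -> R := fun i => x i + t * w i.
Definition vscale s x : 'I_3 -> R := fun i => s * x i.
Definition vec3 (a b c : R) : 'I_3 -> R :=
  fun i => if i == o0 then a else if i == o1 then b else c.
Definition mxrow g (i : 'I_3) : 'I_3 -> R := fun a => g i a.

Lemma vec3_coords x : x = vec3 (x o0) (x o1) (x o2).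
Proof. by apply/funext => i; rewrite /vec3; case_ord3 i. Qed.

Lemma sqnorm_vec3 a b c : sqnorm (vec3 a b c) = a ^+ 2 + b ^+ 2 + c ^+ 2.
Proof. by rewrite /sqnorm sum_ord3. Qed.

Lemma sqnorm_ge0 x : 0 <= sqnorm x.
Proof. by rewrite /sqnorm sumr_ge0 // => i _; rewrite sqr_ge0. Qed.

Lemma sqnorm_shift x t w : vdot x w = 0 -> sqnorm (vshift x t w) = sqnorm x + t ^+ 2 * sqnorm w.
Proof.
rewrite /vdot /sqnorm /vshift !sum_ord3 => H.
by rewrite -[RHS]addr0 -(mulr0 (2%:R * t)) -H; ring.
Qed.

Lemma sqnorm_shift_gt0 x t w : sqnorm x = 1 -> vdot x w = 0 -> 0 < sqnorm (vshift x t w).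
Proof.
move=> Hx Hxw; rewrite sqnorm_shift // Hx.
by have := sqnorm_ge0 w; have := sqr_ge0 t; nra.
Qed.

Lemma sqnorm_normalize x : 0 < sqnorm x -> sqnorm (vscale (Num.sqrt (sqnorm x))^-1 x) = 1.
Proof.
move=> s0; rewrite /sqnorm /vscale.
under eq_bigr do rewrite exprMn.
by rewrite -mulr_sumr exprVn sqr_sqrtr ?ltW // mulVf // gt_eqF.
Qed.

Lemma sqnorm_eq0 x : sqnorm x = 0 -> forall i, x i = 0.
Proof.
rewrite /sqnorm sum_ord3 => x0 i; apply/eqP; rewrite -sqrf_eq0; apply/eqP.
have := sqr_ge0 (x o0); have := sqr_ge0 (x o1); have := sqr_ge0 (x o2).
by case_ord3 i; lra.
Qed.

Lemma tact_trilin g h i j k :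
  tact g h i j k = trilin h (mxrow g i) (mxrow g j) (mxrow g k).
Proof.
apply: eq_bigr => a _; apply: eq_bigr => b _; apply: eq_bigr => c _.
by rewrite /mxrow; ring.
Qed.

Lemma cubic_shift h x t w : is_harm3 h ->
  cubic h (vshift x t w) = cubic h x + 3%:R * t * trilin h x x w
    + 3%:R * t ^+ 2 * trilin h x w w + t ^+ 3 * cubic h w.
Proof. by move=> /harm7_coords ->; rewrite /cubic /trilin /vshift !sum_ord3 /harm7 /=; ring. Qed.

Lemma cubic_scale h s x : cubic h (vscale s x) = s ^+ 3 * cubic h x.
Proof. by rewrite /cubic /trilin /vscale !sum_ord3; ring. Qed.

Lemma cubic_normalize h x : 0 < sqnorm x ->
  cubic h x ^+ 2 = sqnorm x ^+ 3 * cubic h (vscale (Num.sqrt (sqnorm x))^-1 x) ^+ 2.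
Proof.
move=> s0; rewrite cubic_scale; set r := Num.sqrt (sqnorm x).
have r0 : r != 0 by rewrite gt_eqF // sqrtr_gt0.
have <- : r ^+ 2 = sqnorm x by rewrite sqr_sqrtr // ltW.
by field.
Qed.

Lemma ler_mul_exprn_norm (c t : R) (k : nat) : `|t| <= 1 -> c * t ^+ k <= `|c|.
Proof.
move=> Ht; apply: le_trans (ler_norm _) _.
rewrite normrM normrX -[X in _ <= X]mulr1 ler_wpM2l //.
by rewrite exprn_ile1.
Qed.

Lemma le0_of_lin_le_quad (s K : R) :
  (forall t, 0 < t -> t <= 1 -> s * t <= K * t ^+ 2) -> s <= 0.
Proof.
move=> H; rewrite leNgt; apply/negP => s0.
have K0 : 0 <= K.
  by have := H 1 ltr01 (lexx _); rewrite expr1n !mulr1 => sK; lra.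
pose t := s / (s + K).
have t0 : 0 < t by rewrite /t divr_gt0 // ltr_wpDr.
have t1 : t <= 1 by rewrite /t ler_pdivrMr ?ltr_wpDr // mul1r lerDl.
have E : t * (s + K) = s by rewrite /t divfK // gt_eqF // ltr_wpDr.
have := H t t0 t1; clearbody t.
have ts : 0 < t * s by rewrite mulr_gt0.
rewrite expr2 mulrA ler_pM2r // => Hst.
rewrite mulrDr in E; lra.
Qed.

(* The first-order condition at t = 0 for the maximum of
   (M + 3 t a + 3 t^2 b + t^3 c)^2 / (1 + t^2 W)^3, whose value at 0 is M^2. *)
Lemma cubic_ratio_stationary (M a b c W : R) : 0 <= W ->
  (forall t, (M + 3%:R * t * a + 3%:R * t ^+ 2 * b + t ^+ 3 * c) ^+ 2 <=
             M ^+ 2 * (1 + t ^+ 2 * W) ^+ 3) -> M * a = 0.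
Proof.
move=> W0 H.
pose c0 := 3%:R * M ^+ 2 * W - 9%:R * a ^+ 2 - 6%:R * M * b.
pose c1 := - (2%:R * M * c + 18%:R * a * b).
pose c2 := 3%:R * M ^+ 2 * W ^+ 2 - 9%:R * b ^+ 2 - 6%:R * a * c.
pose c3 := - (6%:R * b * c).
pose c4 := M ^+ 2 * W ^+ 3 - c ^+ 2.
pose K := `|c0| + `|c1| + `|c2| + `|c3| + `|c4|.
have key t : `|t| <= 1 -> 6%:R * M * a * t <= K * t ^+ 2.
  move=> Ht; have := H t.
  have E : M ^+ 2 * (1 + t ^+ 2 * W) ^+ 3 -
      (M + 3%:R * t * a + 3%:R * t ^+ 2 * b + t ^+ 3 * c) ^+ 2 =
      - (6%:R * M * a * t) + t ^+ 2 * (c0 + c1 * t + c2 * t ^+ 2 + c3 * t ^+ 3 + c4 * t ^+ 4).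
    by rewrite /c0 /c1 /c2 /c3 /c4; ring.
  have B : c0 + c1 * t + c2 * t ^+ 2 + c3 * t ^+ 3 + c4 * t ^+ 4 <= K.
    have := ler_mul_exprn_norm c0 0 Ht; have := ler_mul_exprn_norm c1 1 Ht.
    have := ler_mul_exprn_norm c2 2 Ht; have := ler_mul_exprn_norm c3 3 Ht.
    have := ler_mul_exprn_norm c4 4 Ht.
    by rewrite /K expr0 expr1 mulr1; lra.
  have t2 : 0 <= t ^+ 2 by rewrite sqr_ge0.
  move=> Ht'; rewrite -subr_ge0 E in Ht'.
  have : t ^+ 2 * (c0 + c1 * t + c2 * t ^+ 2 + c3 * t ^+ 3 + c4 * t ^+ 4) <= t ^+ 2 * K.
    by rewrite ler_wpM2l.
  nra.
have P1 : 6%:R * M * a <= 0.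
  apply: (le0_of_lin_le_quad (K := K)) => t t0 t1; apply: key.
  by rewrite ger0_norm // ltW.
have P2 : - (6%:R * M * a) <= 0.
  apply: (le0_of_lin_le_quad (K := K)) => t t0 t1.
  have := key (- t); rewrite normrN ger0_norm ?(ltW t0) // => /(_ t1).
  by rewrite sqrrN; lra.
nra.
Qed.

(* Lagrange condition; K only needs to contain the normalized points of the
   line n + t w. *)
Lemma cubic_max_stationary h n w (K : ('I_3 -> R) -> Prop) :
  is_harm3 h -> sqnorm n = 1 -> vdot n w = 0 ->
  (forall u, K u -> cubic h u ^+ 2 <= cubic h n ^+ 2) ->
  (forall t, K (vscale (Num.sqrt (sqnorm (vshift n t w)))^-1 (vshift n t w))) ->
  cubic h n * trilin h n n w = 0.
Proof.
move=> Hh Hn Hw HM HK.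
apply: (@cubic_ratio_stationary _ _ (trilin h n w w) (cubic h w) (sqnorm w)).
  exact: sqnorm_ge0.
move=> t; rewrite -cubic_shift // -Hn -sqnorm_shift //.
rewrite cubic_normalize ?sqnorm_shift_gt0 // mulrC ler_wpM2r ?HM //.
by rewrite exprn_ge0 // sqnorm_ge0.
Qed.

End CubicForm.

Section NormalForms.
Variable R : realType.
Implicit Types (h : tensor3 R) (G : 'M[R]_3) (n u w x : 'I_3 -> R).

(* The Householder reflection I - 2 w w^T / |w|^2 with w = e3 - n, which
   exchanges e3 and n. *)
Lemma orthogonal3_row2 n : sqnorm n = 1 -> exists G, orthogonal3 G /\ forall j, G o2 j = n j.
Proof.
move=> Hn.
have Hn' : n o0 ^+ 2 + n o1 ^+ 2 + n o2 ^+ 2 = 1 by rewrite -Hn /sqnorm sum_ord3.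
have [n21|n21] := eqVneq (n o2) 1.
  have n0 : n o0 = 0 by nra.
  have n1 : n o1 = 0 by nra.
  exists 1%:M; split; first by rewrite /orthogonal3 trmx1 mulmx1.
  by move=> j; rewrite mxE; case_ord3 j; rewrite /= ?n0 ?n1 ?n21.
pose w i := kron R o2 i - n i.
have D2 : sqnorm w = 2%:R * (1 - n o2) by rewrite /sqnorm sum_ord3 /w /kron /=; nra.
have n2' : 1 - n o2 != 0 by apply: contra_neq n21 => E; lra.
exists (\matrix_(i, j) (kron R i j - 2%:R * w i * w j / sqnorm w)); split.
  have : sqnorm w != 0 by rewrite D2 mulf_neq0 ?pnatr_eq0.
  rewrite /sqnorm sum_ord3 => D0; apply/matrixP => i j; rewrite !mxE sum_ord3 !mxE.
  by case_ord3 i; case_ord3 j; rewrite /kron /=; field.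
by move=> j; rewrite mxE D2 /w /kron; case_ord3 j; rewrite /=; field.
Qed.

Definition rotz (a b : R) : 'M[R]_3 :=
  \matrix_(i, j) (if i == o0 then vec3 a (- b) 0 j
                  else if i == o1 then vec3 b a 0 j else vec3 0 0 1 j).

Lemma orthogonal3_rotz a b : a ^+ 2 + b ^+ 2 = 1 -> orthogonal3 (rotz a b).
Proof.
move=> H; apply/matrixP => i j; rewrite !mxE sum_ord3 !mxE.
by case_ord3 i; case_ord3 j; rewrite /vec3 /=; lra.
Qed.

Lemma tact_rotz_tetraX a b l : tact (rotz a b) (tscale l tetraX) =
  harm7 0 0 (- (2%:R * l * a * b)) 0 (l * (a ^+ 2 - b ^+ 2)) 0 (2%:R * l * a * b).
Proof.
apply: tensor_ext => i j k; rewrite /tact !sum_ord3 !mxE /tscale /tetraX /vec3.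
by case_ord3 i; case_ord3 j; case_ord3 k; rewrite /harm7 /=; ring.
Qed.

(* The harmonic tensors with h_133 = h_233 = 0, i.e. with h(e3,e3,.) parallel
   to e3, parametrized by h_113, h_122, h_123, h_222, h_223. *)
Definition harm_nf (c d ee gg ii : R) := harm7 (- d) (- gg) c d ee gg ii.

Lemma harm_nfE h : is_harm3 h -> h o0 o2 o2 = 0 -> h o1 o2 o2 = 0 ->
  exists c d ee gg ii, h = harm_nf c d ee gg ii.
Proof.
move=> Hh H1 H2; exists (h o0 o0 o2), (h o0 o1 o1), (h o0 o1 o2), (h o1 o1 o1), (h o1 o1 o2).
rewrite {1}(harm7_coords Hh) /harm_nf.
by rewrite (harm7_coords Hh) /harm7 /= in H1 H2; congr harm7; lra.
Qed.

Lemma d2dev_zero_nf c d ee gg ii : d2dev_zero (harm_nf c d ee gg ii) ->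
  [/\ c ^+ 2 = ii ^+ 2, ee * (c + ii) = 0, d ^+ 2 + gg ^+ 2 = c * ii + ii ^+ 2,
      d * (ii - c) = 2%:R * ee * gg & gg * (ii - c) = - (2%:R * d * ee)].
Proof.
move=> /d2dev_zeroP H.
have E00 := H o0 o0; have E11 := H o1 o1; have E22 := H o2 o2.
have E01 := H o0 o1; have E02 := H o0 o2; have E12 := H o1 o2.
move: E00 E11 E22 E01 E02 E12; rewrite /d2 /kron !sum_ord3 /harm_nf /harm7 /=.
by move=> E00 E11 E22 E01 E02 E12; split; nra.
Qed.

Lemma d2dev_zero_nf_generic c d ee gg ii :
  d2dev_zero (harm_nf c d ee gg ii) -> c + ii != 0 ->
  [/\ ii = c, ee = 0 & d ^+ 2 + gg ^+ 2 = 2%:R * c ^+ 2].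
Proof.
move=> /d2dev_zero_nf [Q1 Q2 Q3 _ _] ci.
have iE : ii = c.
  have : (c - ii) * (c + ii) = 0 by rewrite -subr_sqr Q1 subrr.
  by move/eqP; rewrite mulf_eq0 (negbTE ci) orbF subr_eq0 => /eqP.
have e0 : ee = 0 by move/eqP: Q2; rewrite mulf_eq0 (negbTE ci) orbF => /eqP.
by split => //; rewrite Q3 iE; ring.
Qed.

Lemma half_angle (c ee : R) : exists a b l, [/\ a ^+ 2 + b ^+ 2 = 1,
  c = - (2%:R * l * a * b) & ee = l * (a ^+ 2 - b ^+ 2)].
Proof.
pose r := Num.sqrt (c ^+ 2 + ee ^+ 2).
have r2 : r ^+ 2 = c ^+ 2 + ee ^+ 2 by rewrite sqr_sqrtr // addr_ge0 ?sqr_ge0.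
have r0 : 0 <= r by rewrite sqrtr_ge0.
have [er|ner] := eqVneq (r + ee) 0.
  by exists 0, 1, r; split; [ring | nra | lra].
have erp : 0 < r + ee by rewrite lt_def ner /=; nra.
have rp : 0 < r by nra.
have q0 : 0 < (r + ee) / (2%:R * r) by rewrite divr_gt0 // ?mulr_gt0.
pose a := Num.sqrt ((r + ee) / (2%:R * r)).
have a2 : a ^+ 2 = (r + ee) / (2%:R * r) by rewrite sqr_sqrtr // ltW.
have an : a != 0 by rewrite gt_eqF // sqrtr_gt0.
have rn : r != 0 by rewrite gt_eqF.
have cE : c ^+ 2 = r ^+ 2 - ee ^+ 2 by lra.
exists a, (- c / (2%:R * r * a)), r.
have b2 : (- c / (2%:R * r * a)) ^+ 2 = c ^+ 2 / (4%:R * r ^+ 2 * a ^+ 2).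
  by field; rewrite an rn.
rewrite b2 a2 cE; split.
- by field; rewrite rn gt_eqF.
- by field; rewrite an rn.
- by field; rewrite rn gt_eqF.
Qed.

Lemma tetraX_orbit_nf_trace0 c d ee gg ii :
  d2dev_zero (harm_nf c d ee gg ii) -> c + ii = 0 -> tetraX_orbit (harm_nf c d ee gg ii).
Proof.
move=> /d2dev_zero_nf [Q1 Q2 Q3 Q4 Q5] ci.
have iE : ii = - c by lra.
have d0 : d = 0 by nra.
have g0 : gg = 0 by nra.
have [a [b [l [Hab Hc He]]]] := half_angle c ee.
exists (rotz a b), l; split; first exact: orthogonal3_rotz.
by rewrite tact_rotz_tetraX /harm_nf iE d0 g0 oppr0 -Hc -He; congr harm7; lra.
Qed.

Definition axial h n (k : 'I_3) := \sum_(i < 3) \sum_(j < 3) h i j k * n i * n j.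

Lemma trilin_axial h n z : trilin h n n z = \sum_(k < 3) axial h n k * z k.
Proof. by rewrite /trilin /axial !sum_ord3; ring. Qed.

Lemma tact_row2 G h n k : (forall j, G o2 j = n j) ->
  tact G h o2 o2 k = trilin h n n (mxrow G k).
Proof. by move=> Gn; rewrite tact_trilin; congr trilin; apply/funext => j; apply: Gn. Qed.

Lemma tetraX_orbit_e3_null h : is_harm3 h -> d2dev_zero h ->
  (forall k, h o2 o2 k = 0) -> tetraX_orbit h.
Proof.
move=> Hh Hd Z; have [S1 [S2 _]] := Hh.
have Z' i : h i o2 o2 = 0 by rewrite S1 S2 Z.
have [c [d [ee [gg [ii E]]]]] := harm_nfE Hh (Z' o0) (Z' o1).
rewrite E in Hd *; apply: tetraX_orbit_nf_trace0 => //.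
by move: (Z o2); rewrite E /harm_nf /harm7 /=; lra.
Qed.

Lemma tetraX_orbit_axial0 h n : is_harm3 h -> d2dev_zero h -> sqnorm n = 1 ->
  (forall k, axial h n k = 0) -> tetraX_orbit h.
Proof.
move=> Hh Hd Hn Hv.
have [G [HG Gn]] := orthogonal3_row2 Hn.
apply: (tetraX_orbit_tact HG); apply: tetraX_orbit_e3_null.
- exact: is_harm3_tact.
- exact: d2dev_zero_tact.
- by move=> k; rewrite (tact_row2 _ _ Gn) trilin_axial big1 // => j _; rewrite Hv mul0r.
Qed.

(* With d^2 = 2 c^2, the unit vector n = (x, 0, d x / (2 c)), x = sqrt(2/3),
   satisfies h(n,n,.) = 0. *)
Lemma harm_nf_axial0 c d : c != 0 -> d ^+ 2 = 2%:R * c ^+ 2 ->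
  exists n, sqnorm n = 1 /\ forall k, axial (harm_nf c d 0 0 c) n k = 0.
Proof.
move=> c0 Hd.
pose x := Num.sqrt (2%:R / 3%:R : R).
have x2 : x ^+ 2 = 2%:R / 3%:R by rewrite sqr_sqrtr // divr_ge0 // ler0n.
pose z := d * x / (2%:R * c).
have z2 : z ^+ 2 = x ^+ 2 / 2%:R by rewrite /z expr_div_n !exprMn Hd; field.
exists (vec3 x 0 z); split.
  by rewrite sqnorm_vec3 z2 x2; field.
move=> k; have -> : axial (harm_nf c d 0 0 c) (vec3 x 0 z) k =
    if k == o0 then 2%:R * c * x * z - d * x ^+ 2 else if k == o1 then 0
    else c * x ^+ 2 - 2%:R * c * z ^+ 2.
  by rewrite /axial !sum_ord3 /harm_nf /harm7 /vec3; case_ord3 k; rewrite /=; ring.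
case_ord3 k; rewrite /=.
- by rewrite /z; field.
- by [].
- by rewrite z2; field.
Qed.

Lemma tetraX_orbit_nf_g0 c d ee ii :
  d2dev_zero (harm_nf c d ee 0 ii) -> tetraX_orbit (harm_nf c d ee 0 ii).
Proof.
move=> Hd; have [ci|ci] := eqVneq (c + ii) 0; first exact: tetraX_orbit_nf_trace0.
have [iE e0 Hcd] := d2dev_zero_nf_generic Hd ci.
have c0 : c != 0 by apply: contra_neq ci => c0; rewrite iE c0 addr0.
have Hd2 : d ^+ 2 = 2%:R * c ^+ 2 by rewrite -Hcd; ring.
have [n [Hn Hv]] := harm_nf_axial0 c0 Hd2.
apply: (tetraX_orbit_axial0 (is_harm3_harm7 _ _ _ _ _ _ _) Hd Hn).
by rewrite iE e0.
Qed.

Definition circle_argmax h (a b : R) := a ^+ 2 + b ^+ 2 = 1 /\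
  forall a' b', a' ^+ 2 + b' ^+ 2 = 1 ->
    cubic h (vec3 a' b' 0) ^+ 2 <= cubic h (vec3 a b 0) ^+ 2.

Definition sphere_argmax h n := sqnorm n = 1 /\
  forall u, sqnorm u = 1 -> cubic h u ^+ 2 <= cubic h n ^+ 2.

Lemma circle_argmax_stationary h a b : is_harm3 h -> circle_argmax h a b ->
  cubic h (vec3 a b 0) * trilin h (vec3 a b 0) (vec3 a b 0) (vec3 (- b) a 0) = 0.
Proof.
move=> Hh [Hab Hmax].
have Hu : sqnorm (vec3 a b 0) = 1 by rewrite sqnorm_vec3 -Hab; ring.
have Huw : vdot (vec3 a b 0) (vec3 (- b) a 0) = 0 by rewrite /vdot sum_ord3 /vec3 /=; ring.
apply: (cubic_max_stationary (K := fun v => v o2 = 0 /\ v o0 ^+ 2 + v o1 ^+ 2 = 1)) => //.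
  by move=> v [v2 v01]; rewrite (vec3_coords v) v2; exact: Hmax.
move=> t; have := sqnorm_normalize (sqnorm_shift_gt0 t Hu Huw).
rewrite /vscale /vshift /vec3 /sqnorm sum_ord3 /= !mulr0 addr0 mulr0.
by split => //; lra.
Qed.

Lemma cubic_harm_nf_e1 c d ee gg ii : cubic (harm_nf c d ee gg ii) (vec3 1 0 0) = - d.
Proof. by rewrite /cubic /trilin !sum_ord3 /harm_nf /harm7 /vec3 /=; ring. Qed.

Lemma cubic_harm_nf_e2 c d ee gg ii : cubic (harm_nf c d ee gg ii) (vec3 0 1 0) = gg.
Proof. by rewrite /cubic /trilin !sum_ord3 /harm_nf /harm7 /vec3 /=; ring. Qed.

Lemma circle_argmax_nf_neq0 c d gg a b : c != 0 -> d ^+ 2 + gg ^+ 2 = 2%:R * c ^+ 2 ->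
  circle_argmax (harm_nf c d 0 gg c) a b -> cubic (harm_nf c d 0 gg c) (vec3 a b 0) != 0.
Proof.
move=> c0 Hcd [_ Hmax]; apply: contra_neq c0 => M0.
have B1 := Hmax 1 0; rewrite M0 cubic_harm_nf_e1 in B1.
have B2 := Hmax 0 1; rewrite M0 cubic_harm_nf_e2 in B2.
have := B1 ltac:(ring); have := B2 ltac:(ring); nra.
Qed.

Lemma tact_rotz_nf_aligned a b c d gg :
  let h := tact (rotz a b) (harm_nf c d 0 gg c) in h o0 o2 o2 = 0 /\ h o1 o2 o2 = 0.
Proof. by split; rewrite /tact !sum_ord3 !mxE /vec3 /harm_nf /harm7 /=; ring. Qed.

(* Rotating the circle maximizer u onto e1 kills h_112 = h(u,u,u^perp). *)
Lemma tetraX_orbit_aligned h a b : is_harm3 h -> d2dev_zero h ->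
  h o0 o2 o2 = 0 -> h o1 o2 o2 = 0 -> circle_argmax h a b -> tetraX_orbit h.
Proof.
move=> Hh Hd H1 H2 Hab.
have [c [d [ee [gg [ii E]]]]] := harm_nfE Hh H1 H2.
rewrite E in Hd Hab *; clear Hh H1 H2 E.
have [ci|ci] := eqVneq (c + ii) 0; first exact: tetraX_orbit_nf_trace0.
have [iE e0 Hcd] := d2dev_zero_nf_generic Hd ci.
have c0 : c != 0 by apply: contra_neq ci => c0; rewrite iE c0 addr0.
rewrite iE e0 in Hd Hab *.
have Hh : is_harm3 (harm_nf c d 0 gg c) by exact: is_harm3_harm7.
have /eqP := circle_argmax_stationary Hh Hab.
rewrite mulf_eq0 (negbTE (circle_argmax_nf_neq0 c0 Hcd Hab)) /= => /eqP Tuw.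
have Hrot : orthogonal3 (rotz a (- b)) by apply: orthogonal3_rotz; rewrite sqrrN; case: Hab.
apply: (tetraX_orbit_tact Hrot).
have Hh2 := is_harm3_tact Hrot Hh; have Hd2 := d2dev_zero_tact Hrot Hh Hd.
have [Z0 Z1] := tact_rotz_nf_aligned a (- b) c d gg.
have [c2 [d2 [e2 [g2 [i2 E2]]]]] := harm_nfE Hh2 Z0 Z1.
have g20 : g2 = 0.
  have : tact (rotz a (- b)) (harm_nf c d 0 gg c) o0 o0 o1 = 0.
    rewrite tact_trilin -[RHS]Tuw; congr trilin; apply/funext => j;
    by rewrite /mxrow mxE /vec3; case_ord3 j; rewrite /= ?opprK.
  by rewrite E2 /harm_nf /harm7 /= => /eqP; rewrite oppr_eq0 => /eqP.
by rewrite E2 g20 in Hd2 *; exact: tetraX_orbit_nf_g0.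
Qed.

Lemma sphere_argmax_stationary h n w : is_harm3 h -> sphere_argmax h n ->
  cubic h n != 0 -> vdot n w = 0 -> trilin h n n w = 0.
Proof.
move=> Hh [Hn Hmax] M0 Hw.
have /eqP := cubic_max_stationary (K := fun u => sqnorm u = 1) Hh Hn Hw Hmax
  (fun t => sqnorm_normalize (sqnorm_shift_gt0 t Hn Hw)).
by rewrite mulf_eq0 (negbTE M0) => /eqP.
Qed.

Lemma sphere_argmax_cubic0 h n : sphere_argmax h n -> cubic h n = 0 ->
  forall x, cubic h x = 0.
Proof.
move=> [_ Hmax] M0 x; have := sqnorm_ge0 x; rewrite le_eqVlt => /orP [/eqP x0|xpos].
  have x0' := sqnorm_eq0 (esym x0).
  rewrite /cubic /trilin big1 // => i _; rewrite big1 // => j _; rewrite big1 // => k _.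
  by rewrite !x0' !mulr0.
have := Hmax _ (sqnorm_normalize xpos); rewrite M0; set c' := cubic h _ => Hle.
have c'0 : c' ^+ 2 = 0 by apply/eqP; rewrite eq_le sqr_ge0 andbT; lra.
by apply/eqP; rewrite -sqrf_eq0 cubic_normalize // -/c' c'0 mulr0.
Qed.

Lemma cubic_eq0_harm h : is_harm3 h -> (forall x, cubic h x = 0) -> h = harm7 0 0 0 0 0 0 0.
Proof.
move=> Hh Hp; rewrite (harm7_coords Hh).
set q0 := h o0 o0 o0; set q1 := h o0 o0 o1; set q2 := h o0 o0 o2; set q3 := h o0 o1 o1.
set q4 := h o0 o1 o2; set q5 := h o1 o1 o1; set q6 := h o1 o1 o2.
have P a b c : cubic (harm7 q0 q1 q2 q3 q4 q5 q6) (vec3 a b c) = 0.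
  by rewrite -(harm7_coords Hh) Hp.
have A1 := P 1 0 0; have A2 := P 0 1 0; have A3 := P 0 0 1.
have A4 := P 1 1 0; have A5 := P 1 (-1) 0; have A6 := P 1 0 1; have A7 := P 1 0 (-1).
have A8 := P 0 1 1; have A9 := P 0 1 (-1); have A10 := P 1 1 1.
move: A1 A2 A3 A4 A5 A6 A7 A8 A9 A10; rewrite /cubic /trilin !sum_ord3 /harm7 /vec3 /=.
by move=> A1 A2 A3 A4 A5 A6 A7 A8 A9 A10; congr harm7; lra.
Qed.

Lemma tetraX_orbit_harm7_0 : tetraX_orbit (harm7 0 0 0 0 0 0 0 : tensor3 R).
Proof.
exists 1%:M, 0; split; first by rewrite /orthogonal3 trmx1 mulmx1.
by rewrite tact1; apply: tensor_ext => i j k; rewrite harm7_0 /tscale mul0r.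
Qed.

Lemma tact_row2_aligned G h n : is_harm3 h -> orthogonal3 G -> (forall j, G o2 j = n j) ->
  (forall w, vdot n w = 0 -> trilin h n n w = 0) ->
  tact G h o0 o2 o2 = 0 /\ tact G h o1 o2 o2 = 0.
Proof.
move=> Hh HG Gn Hst; have [S1 [S2 _]] := is_harm3_tact HG Hh.
have Z k : k != o2 -> tact G h o2 o2 k = 0.
  move=> k2; rewrite (tact_row2 _ _ Gn) Hst //.
  rewrite /vdot (eq_bigr (fun j => G o2 j * G k j)); last by move=> j _; rewrite Gn.
  by rewrite orthogonal3_rows // /kron eq_sym (negbTE k2).
by split; rewrite S1 S2 Z.
Qed.

End NormalForms.

Section Compactness.
Variable R : realType.
Local Open Scope classical_set_scope.

Section RowVectorFunctions.
Variable n : nat.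
Implicit Types (f g : 'rV[R]_n -> R) (A : set 'rV[R]_n).

Lemma continuous_add f g : continuous f -> continuous g -> continuous (fun v => f v + g v).
Proof. by move=> cf cg x; apply: continuousD; [apply: cf | apply: cg]. Qed.

Lemma continuous_mul f g : continuous f -> continuous g -> continuous (fun v => f v * g v).
Proof. by move=> cf cg x; apply: continuousM; [apply: cf | apply: cg]. Qed.

Lemma continuous_opp f : continuous f -> continuous (fun v => - f v).
Proof. by move=> cf x; apply: continuousN; apply: cf. Qed.

Lemma continuous_sum3 (F : 'I_3 -> 'rV[R]_n -> R) : (forall i, continuous (F i)) ->
  continuous (fun v => \sum_(i < 3) F i v).
Proof.
move=> cF; have -> : (fun v => \sum_(i < 3) F i v) = (fun v => F o0 v + F o1 v + F o2 v).
  by apply/funext => v; rewrite sum_ord3.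
by apply: continuous_add; [apply: continuous_add|]; apply: cF.
Qed.

Lemma continuous_exprn f k : continuous f -> continuous (fun v => f v ^+ k).
Proof.
move=> cf; elim: k => [|k IH]; first exact: cst_continuous.
have -> : (fun v => f v ^+ k.+1) = (fun v => f v * f v ^+ k).
  by apply/funext => v; rewrite exprS.
exact: continuous_mul.
Qed.

Lemma closed_eq0 g : continuous g -> closed [set v | g v = 0].
Proof.
move=> cg; rewrite (_ : [set v | g v = 0] = g @^-1` [set x | x = 0]) //.
by apply: preimage_closed; [move=> x _; apply: cg | apply: closed_eq].
Qed.

Lemma closed_le0 g : continuous g -> closed [set v | g v <= 0].
Proof.
move=> cg; rewrite (_ : [set v | g v <= 0] = g @^-1` [set x | x <= 0]) //.
by apply: preimage_closed; [move=> x _; apply: cg | apply: closed_le].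
Qed.

Lemma bounded_set_coord A (B : R) :
  (forall v, A v -> forall i, `|v ord0 i| <= B) -> bounded_set A.
Proof.
move=> HB; exists (`|B|); split; first exact: num_real.
move=> x Bx v Av /=; change (mx_norm v <= x); rewrite mx_normrE.
apply: bigmax_le; first by apply: le_trans (normr_ge0 B) (ltW Bx).
move=> [i j] _ /=; rewrite (ord1 i).
by apply: le_trans (HB v Av j) _; apply: le_trans (ler_norm B) (ltW Bx).
Qed.

Lemma exists_argmax f A (B : R) : continuous f -> closed A -> A !=set0 ->
  (forall v, A v -> forall i, `|v ord0 i| <= B) ->
  exists2 c, A c & forall v, A v -> f v <= f c.
Proof.
move=> cf cA A0 HB.
have cpt : compact A by apply: bounded_closed_compact => //; exact: bounded_set_coord HB.
have [c cA' Hc] := EVT_max_rV A0 cpt (continuous_subspaceT cf).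
by exists c; [rewrite -in_setE | move=> v Av; apply: Hc; rewrite in_setE].
Qed.

Lemma exists_argmin f A (B : R) : continuous f -> closed A -> A !=set0 ->
  (forall v, A v -> forall i, `|v ord0 i| <= B) ->
  exists2 c, A c & forall v, A v -> f c <= f v.
Proof.
move=> cf cA A0 HB.
have cpt : compact A by apply: bounded_closed_compact => //; exact: bounded_set_coord HB.
have [c cA' Hc] := EVT_min_rV A0 cpt (continuous_subspaceT cf).
by exists c; [rewrite -in_setE | move=> v Av; apply: Hc; rewrite in_setE].
Qed.

End RowVectorFunctions.

Definition vec_of_row (v : 'rV[R]_3) : 'I_3 -> R := fun i => v ord0 i.

Lemma vec_of_row_mx (u : 'I_3 -> R) : vec_of_row (\row_i u i) = u.
Proof. by apply/funext => i; rewrite /vec_of_row mxE. Qed.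

Lemma continuous_cubic_sqr (h : tensor3 R) :
  continuous (fun v => cubic h (vec_of_row v) ^+ 2).
Proof.
apply: continuous_exprn; do 3 (apply: continuous_sum3 => ?).
by do 3 (apply: continuous_mul; last exact: coord_continuous); exact: cst_continuous.
Qed.

Lemma continuous_sqnorm : continuous (fun v => sqnorm (vec_of_row v)).
Proof. by apply: continuous_sum3 => i; apply: continuous_exprn; exact: coord_continuous. Qed.

Lemma norm_le1_of_sqr (x : R) : x ^+ 2 <= 1 -> `|x| <= 1.
Proof. by move=> H; rewrite ler_norml; apply/andP; split; nra. Qed.

Lemma exists_sphere_argmax (h : tensor3 R) : exists n, sphere_argmax h n.
Proof.
pose A := [set v : 'rV[R]_3 | sqnorm (vec_of_row v) - 1 = 0].
have cA : closed A by apply/closed_eq0/continuous_add/cst_continuous/continuous_sqnorm.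
have A0 : A !=set0 by exists (\row_i vec3 1 0 0 i); rewrite /A /= vec_of_row_mx sqnorm_vec3; ring.
have HB v : A v -> forall i, `|v ord0 i| <= 1.
  rewrite /A /= /sqnorm /vec_of_row sum_ord3 => Av i; apply: norm_le1_of_sqr.
  have := sqr_ge0 (v ord0 o0); have := sqr_ge0 (v ord0 o1); have := sqr_ge0 (v ord0 o2).
  by case_ord3 i; lra.
have [c Ac Hc] := exists_argmax (@continuous_cubic_sqr h) cA A0 HB.
exists (vec_of_row c); split; first by move: Ac; rewrite /A /=; lra.
move=> u Hu; have := Hc (\row_i u i); rewrite vec_of_row_mx; apply.
by rewrite /A /= vec_of_row_mx Hu subrr.
Qed.

Lemma exists_circle_argmax (h : tensor3 R) : exists a b, circle_argmax h a b.
Proof.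
pose A := [set v : 'rV[R]_3 | vec_of_row v o0 ^+ 2 + vec_of_row v o1 ^+ 2 - 1 = 0] `&`
          [set v : 'rV[R]_3 | vec_of_row v o2 = 0].
have cA : closed A.
  apply: closedI; apply: closed_eq0; last exact: coord_continuous.
  apply: continuous_add; last exact: cst_continuous.
  by apply: continuous_add; apply: continuous_exprn; exact: coord_continuous.
have A0 : A !=set0.
  by exists (\row_i vec3 1 0 0 i); rewrite /A /= vec_of_row_mx /vec3 /=; split => //; ring.
have HB v : A v -> forall i, `|v ord0 i| <= 1.
  rewrite /A /= /vec_of_row => -[Av1 Av2] i; apply: norm_le1_of_sqr.
  have := sqr_ge0 (v ord0 o0); have := sqr_ge0 (v ord0 o1).
  by case_ord3 i; [lra | lra | rewrite Av2; lra].
have [c [Ac1 Ac2] Hc] := exists_argmax (@continuous_cubic_sqr h) cA A0 HB.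
rewrite /= in Ac1 Ac2.
exists (vec_of_row c o0), (vec_of_row c o1); split; first by lra.
move=> a' b' Hab; have := Hc (\row_i vec3 a' b' 0 i); rewrite vec_of_row_mx.
rewrite -Ac2 -vec3_coords; apply.
by rewrite /A /= vec_of_row_mx /vec3 /=; split => //; lra.
Qed.

Definition harm_of_row (v : 'rV[R]_7) : tensor3 R :=
  harm7 (v ord0 (inord 0)) (v ord0 (inord 1)) (v ord0 (inord 2)) (v ord0 (inord 3))
        (v ord0 (inord 4)) (v ord0 (inord 5)) (v ord0 (inord 6)).

Lemma harm_of_row_surj (h : tensor3 R) : is_harm3 h -> exists v, harm_of_row v = h.
Proof.
move=> Hh; exists (\row_(i < 7) nth 0 [:: h o0 o0 o0; h o0 o0 o1; h o0 o0 o2; h o0 o1 o1;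
   h o0 o1 o2; h o1 o1 o1; h o1 o1 o2] i).
by rewrite /harm_of_row !mxE !inordK //= -harm7_coords.
Qed.

Lemma harm_of_row_coord v i : exists i1 j1 k1, harm_of_row v i1 j1 k1 = v ord0 i.
Proof.
rewrite -[i]inord_val; case: i => [[|[|[|[|[|[|[|m]]]]]]] Hi] //=.
- by exists o0, o0, o0.
- by exists o0, o0, o1.
- by exists o0, o0, o2.
- by exists o0, o1, o1.
- by exists o0, o1, o2.
- by exists o1, o1, o1.
- by exists o1, o1, o2.
Qed.

Lemma continuous_harm_of_row i j k : continuous (fun v => harm_of_row v i j k).
Proof.
rewrite /harm_of_row /harm7; case_ord3 i; case_ord3 j; case_ord3 k; rewrite /=;
  first [ exact: coord_continuous
        | by apply: continuous_add; apply: continuous_opp; exact: coord_continuous ].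
Qed.

Lemma continuous_tnorm2 (F : 'rV[R]_7 -> tensor3 R) :
  (forall i j k, continuous (fun v => F v i j k)) -> continuous (fun v => tnorm2 (F v)).
Proof.
move=> cF; do 3 (apply: continuous_sum3 => ?).
by apply: continuous_exprn; exact: cF.
Qed.

Definition d2dev_sqnorm (h : tensor3 R) := \sum_(i < 3) \sum_(j < 3) d2dev h i j ^+ 2.

Lemma d2dev_sqnorm_eq0 h : d2dev_sqnorm h = 0 <-> d2dev_zero h.
Proof.
split=> [H i j|H]; last by rewrite /d2dev_sqnorm big1 // => i _; rewrite big1 // => j _; rewrite H expr2 mulr0.
have P i' : true -> 0 <= \sum_(j < 3) d2dev h i' j ^+ 2.
  by move=> _; apply: sumr_ge0 => j' _; apply: sqr_ge0.
have H1 := @psumr_eq0P _ _ _ _ P H i isT.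
have H2 := @psumr_eq0P _ _ _ _ (fun j' _ => sqr_ge0 (d2dev h i j')) H1 j isT.
by move/eqP: H2; rewrite sqrf_eq0 => /eqP.
Qed.

Lemma continuous_d2dev_sqnorm : continuous (fun v => d2dev_sqnorm (harm_of_row v)).
Proof.
have cd2 i j : continuous (fun v => d2 (harm_of_row v) i j).
  do 2 (apply: continuous_sum3 => ?).
  by apply: continuous_mul; exact: continuous_harm_of_row.
do 2 (apply: continuous_sum3 => ?); apply: continuous_exprn.
apply: continuous_add; first exact: cd2.
apply: continuous_opp; do 2 (apply: continuous_mul; last exact: cst_continuous).
by apply: continuous_sum3 => k; exact: cd2.
Qed.

Lemma ler_sum_ord3 (F : 'I_3 -> R) i : (forall j, 0 <= F j) -> F i <= \sum_(j < 3) F j.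
Proof. by move=> F0; rewrite (bigD1 i) //= lerDl sumr_ge0 // => j _; apply: F0. Qed.

Lemma sqr_le_tnorm2 (t : tensor3 R) i j k : t i j k ^+ 2 <= tnorm2 t.
Proof.
have Hk := @ler_sum_ord3 (fun k' => t i j k' ^+ 2) k (fun _ => sqr_ge0 _).
have Hj := @ler_sum_ord3 (fun j' => \sum_(k' < 3) t i j' k' ^+ 2) j
  (fun _ => sumr_ge0 _ (fun _ _ => sqr_ge0 _)).
have Hi := @ler_sum_ord3 (fun i' => \sum_(j' < 3) \sum_(k' < 3) t i' j' k' ^+ 2) i
  (fun _ => sumr_ge0 _ (fun _ _ => sumr_ge0 _ (fun _ _ => sqr_ge0 _))).
exact: le_trans Hk (le_trans Hj Hi).
Qed.

Lemma harm_of_row_bounded (B : R) v : tnorm2 (harm_of_row v) <= B ->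
  forall i, `|v ord0 i| <= B + 1.
Proof.
move=> vB i; have [i1 [j1 [k1 <-]]] := harm_of_row_coord v i.
have := sqr_le_tnorm2 (harm_of_row v) i1 j1 k1; set x := harm_of_row v i1 j1 k1 => Hx.
by rewrite ler_norml; apply/andP; split; nra.
Qed.

Lemma tnorm2_sub_ge (a b : tensor3 R) : tnorm2 b / 2%:R - tnorm2 a <= tnorm2 (tsub a b).
Proof.
rewrite /tnorm2 /tsub mulr_suml -sumrB; apply: ler_sum => i _.
rewrite mulr_suml -sumrB; apply: ler_sum => j _.
rewrite mulr_suml -sumrB; apply: ler_sum => k _.
by have := sqr_ge0 (a i j k - b i j k / 2%:R); nra.
Qed.

Lemma tnorm2_harm7_0 : tnorm2 (harm7 0 0 0 0 0 0 0 : tensor3 R) = 0.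
Proof.
rewrite /tnorm2 big1 // => i _; rewrite big1 // => j _; rewrite big1 // => k _.
by rewrite harm7_0 expr2 mulr0.
Qed.

Lemma tsub_harm7_0 (h : tensor3 R) : tsub h (harm7 0 0 0 0 0 0 0) = h.
Proof. by apply: tensor_ext => i j k; rewrite /tsub harm7_0 subr0. Qed.

(* Points with ||h||^2 > 4 ||h0||^2 are farther from h0 than 0 is, so it is
   enough to minimize over the compact part of the zero set inside that ball. *)
Lemma exists_zero_set_argmin (h0 : tensor3 R) :
  exists h, is_minimizer (fun h => is_harm3 h /\ d2dev_zero h) h0 h.
Proof.
pose B := 4%:R * tnorm2 h0.
have B0 : 0 <= B by rewrite mulr_ge0 ?ler0n ?tnorm2_ge0.
pose A := [set v : 'rV[R]_7 | d2dev_sqnorm (harm_of_row v) = 0] `&`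
          [set v | tnorm2 (harm_of_row v) - B <= 0].
have cA : closed A.
  apply: closedI; first exact: closed_eq0 continuous_d2dev_sqnorm.
  apply/closed_le0/continuous_add/cst_continuous.
  exact: continuous_tnorm2 continuous_harm_of_row.
have row0 : harm_of_row 0 = harm7 0 0 0 0 0 0 0 by rewrite /harm_of_row !mxE.
have A0 : A 0.
  rewrite /A /= row0; split; last by rewrite tnorm2_harm7_0 sub0r oppr_le0.
  by apply/d2dev_sqnorm_eq0; case: (tetraX_orbit_harm (tetraX_orbit_harm7_0 R)).
have cdist : continuous (fun v => tnorm2 (tsub h0 (harm_of_row v))).
  apply: continuous_tnorm2 => i j k; apply: continuous_add; first exact: cst_continuous.
  by apply: continuous_opp; exact: continuous_harm_of_row.
have HB v : A v -> forall i, `|v ord0 i| <= B + 1.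
  by move=> [_ /=]; rewrite subr_le0; exact: harm_of_row_bounded.
have [c [Dc _] Hc] := exists_argmin cdist cA (ex_intro _ 0 A0) HB.
exists (harm_of_row c); split.
  by split; [exact: is_harm3_harm7 | exact: (d2dev_sqnorm_eq0 _).1 Dc].
move=> y [Hy Dy]; have [v Ev] := harm_of_row_surj Hy; rewrite -Ev in Dy *.
have [vB|vB] := lerP (tnorm2 (harm_of_row v)) B.
  by apply: Hc; split; [exact: (d2dev_sqnorm_eq0 _).2 Dy | rewrite /= subr_le0].
apply: le_trans (Hc 0 A0) _; rewrite row0 tsub_harm7_0.
by apply: le_trans (tnorm2_sub_ge h0 _); have := tnorm2_ge0 h0; rewrite /B in vB; lra.
Qed.

End Compactness.

Lemma harm_d2dev_zero_tetraX_orbit (R : realType) (h : tensor3 R) :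
  is_harm3 h -> d2dev_zero h -> tetraX_orbit h.
Proof.
move=> Hh Hd; have [n Hn] := exists_sphere_argmax h.
have [M0|M0] := eqVneq (cubic h n) 0.
  rewrite (cubic_eq0_harm Hh (sphere_argmax_cubic0 Hn M0)); exact: tetraX_orbit_harm7_0.
have [G [HG Gn]] := orthogonal3_row2 Hn.1.
have [Z0 Z1] := tact_row2_aligned Hh HG Gn (fun w => sphere_argmax_stationary Hh Hn M0).
have [a [b Hab]] := exists_circle_argmax (tact G h).
apply: (tetraX_orbit_tact HG); apply: (tetraX_orbit_aligned _ _ Z0 Z1 Hab).
- exact: is_harm3_tact.
- exact: d2dev_zero_tact.
Qed.

Lemma closed_stratum_OminusE (R : realType) (e : tensor3 R) :
  in_closed_stratum_Ominus e <-> is_harm3 e /\ d2dev_zero e.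
Proof.
split=> [/stratum_tetraX_orbit /tetraX_orbit_harm // | [Hh Hd]].
exact/tetraX_orbit_stratum/harm_d2dev_zero_tetraX_orbit.
Qed.

Theorem theorem7p2 (R : realType) (e0 : tensor3 R) :
  is_piez e0 ->
  let h0 := harm_part e0 in
  let g0 := tsub e0 h0 in
  let S := @in_closed_stratum_Ominus R in
  let T := fun h => is_harm3 h /\ d2dev_zero h in
  (exists e, is_minimizer S e0 e) /\
  (exists h, is_minimizer T h0 h) /\
  (forall e h, is_minimizer S e0 e -> is_minimizer T h0 h ->
     tnorm2 (tsub e0 e) = tnorm2 g0 + tnorm2 (tsub h0 h)) /\
  (forall e, is_minimizer S e0 e <-> is_minimizer T h0 e).
Proof.
move=> Hp h0 g0 S T.
have split_dist e : T e -> tnorm2 (tsub e0 e) = tnorm2 g0 + tnorm2 (tsub h0 e).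
  by case=> He _; exact: tnorm2_harm_part_split.
have minE e : is_minimizer S e0 e <-> is_minimizer T h0 e.
  rewrite /is_minimizer /S; setoid_rewrite closed_stratum_OminusE.
  split=> -[Te Hm]; split=> // y Ty; have := Hm y Ty;
    by rewrite (split_dist e) // (split_dist y) // lerD2l.
have [h Hh] := exists_zero_set_argmin h0.
split; first by exists h; apply/minE.
split; first by exists h.
split => // e h' /minE [Te Hme] [Th' Hmh'].
rewrite (split_dist e) //; congr (_ + _).
by apply: le_anti; rewrite Hme ?Hmh'.
Qed.
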